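(* Let $G$ be a finite group and suppose $G$ has a subgroup $H$ admitting a nontrivial homomorphism $\phi: H \to \{\pm 1\}$. Then there is a function $f: G \to \{\pm 1\}$ with $\mathbb{E}_{x\in G} f(x) = 0$ and \[ \Pr_{x,y}\,[f(x)f(y) = f(xy)] \ge \frac{1}{2}\left(1 + \frac{1}{2}\frac{|H|}{|G|}\left(1 - \frac{|N(H)|}{|G|}\right) + \frac{|H|^2}{|G|^2}\right), \] where $x,y$ are chosen uniformly and independently from $G$ and $N(H) = \{c \in G : cHc^{-1} = H\}$ is the normalizer of $H$ in $G$.
   Context: $\mathbb{E}$ denotes the average over the uniform distribution on $G$. *)

From mathcomp Require Import all_boot all_order all_algebra all_fingroup.
Set Implicit Arguments. Unset Strict Implicit. Unset Printing Implicit Defensive.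
Import GRing.Theory Num.Theory.
Local Open Scope ring_scope.

(* {+-1} is modelled as the subset {1, -1} of the multiplicative monoid of rat. *)
Definition pm1 (r : rat) : bool := (r == 1) || (r == -1).

(* phi : H -> {+-1} is a group homomorphism (values outside H are irrelevant). *)
Definition pm1_hom (gT : finGroupType) (H : {set gT}) (phi : gT -> rat) : Prop :=
  (forall x, x \in H -> pm1 (phi x)) /\
  (forall x y, x \in H -> y \in H -> phi (x * y)%g = phi x * phi y).

Definition nontrivial_on (gT : finGroupType) (H : {set gT}) (phi : gT -> rat) : Prop :=
  exists2 x, x \in H & phi x != 1.

Definition avg (gT : finGroupType) (G : {set gT}) (f : gT -> rat) : rat :=
  (\sum_(x in G) f x) / #|G|%:R.

Definition hom_prob (gT : finGroupType) (G : {set gT}) (f : gT -> rat) : rat :=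
  #|[set p : gT * gT | (p.1 \in G) && (p.2 \in G) && (f p.1 * f p.2 == f (p.1 * p.2)%g)]|%:R
  / (#|G| * #|G|)%:R.

Set Warnings "-notation-overridden,-ambiguous-paths".
From mathcomp Require Import all_boot all_order all_algebra all_fingroup.
From mathcomp Require Import ring lra.
Set Implicit Arguments. Unset Strict Implicit. Unset Printing Implicit Defensive.
Import Order.TTheory GRing.Theory Num.Theory.
Local Open Scope ring_scope.

(* Extend phi to G at random: on each right coset H x other than H, take phi
   transported from a coset representative times an independent uniform sign.
   Translating by an element of H with phi = -1 negates f, so E f = 0.
   Averaged over the signs, f(x) f(y) f(xy) vanishes unless x, y, xy all lie in
   H or two of them share a coset other than H.  Hence the row of x in H sums
   to |G|, and for x outside H the row is a +-1 character sum over H :&: H :^ x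
   (so >= 0) plus at most |H :&: H :^ x| terms equal to -1.  That intersection
   has at most |H|/2 elements unless x normalises H, and some choice of signs
   does at least as well as the mean. *)

Lemma pm1_mulrr (r : rat) : pm1 r -> r * r = 1.
Proof. by case/orP=> /eqP->; rewrite ?mulr1 ?mulrNN. Qed.

Lemma pm1M (a b : rat) : pm1 a -> pm1 b -> pm1 (a * b).
Proof.
by case/orP=> /eqP->; case/orP=> /eqP->;
  rewrite /pm1 ?mulr1 ?mulrN1 ?mul1r ?mulN1r ?opprK ?eqxx ?orbT.
Qed.

Lemma pm1_eqN1 (r : rat) : pm1 r -> r != 1 -> r = -1.
Proof. by case/orP=> /eqP->; rewrite ?eqxx. Qed.

Lemma pm1_geN1 (r : rat) : pm1 r -> -1 <= r.
Proof. by case/orP=> /eqP->; rewrite ?lexx // lerN10. Qed.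

Lemma sum_eq0_reindexN (R : numDomainType) (T : finType) (P : pred T)
    (t : T -> T) (F : T -> R) :
  injective t -> (forall x, P (t x) = P x) -> (forall x, P x -> F (t x) = - F x) ->
  \sum_(x | P x) F x = 0.
Proof.
move=> t_inj Pt Ft; apply/eqP; rewrite -eqNr; apply/eqP.
rewrite -sumrN [RHS](reindex_inj t_inj) /=.
by apply: eq_big => [x | x Px]; rewrite ?Pt ?Ft.
Qed.

Lemma sum_pm1_char_ge0 (gT : finGroupType) (L : {group gT}) (chi : gT -> rat) :
  pm1_hom L chi -> 0 <= \sum_(x in L) chi x.
Proof.
move=> [chi_pm1 chiM].
have [/forall_inP chi1 | /forall_inPn [z zL chiz]] := boolP [forall x in L, chi x == 1].
  by rewrite (eq_bigr (fun _ => 1)) => [|x /chi1/eqP //]; rewrite sumr_const ler0n.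
rewrite (@sum_eq0_reindexN _ _ _ (fun x => z * x)%g) // => [|x|x xL]; first exact: mulgI.
  by rewrite groupMl.
by rewrite chiM // (pm1_eqN1 (chi_pm1 z zL) chiz) mulN1r.
Qed.

Lemma exists_ge_avg (R : realDomainType) (T : finType) (F : T -> R) (B : R) :
  (0 < #|T|)%N -> #|T|%:R * B <= \sum_x F x -> exists x, B <= F x.
Proof.
move=> /card_gt0P [x0 _] sumF; apply/existsP; apply: contraLR sumF.
move=> /existsPn F_lt; rewrite -ltNge mulr_natl -sumr_const.
by apply: ltr_sum => [|x _]; [apply/hasP; exists x0; rewrite ?mem_index_enum | rewrite ltNge].
Qed.

Lemma sumr_const_setI (R : pzSemiRingType) (T : finType) (A B : {set T}) (c : R) :
  \sum_(i in A | i \in B) c = #|A :&: B|%:R * c.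
Proof. by rewrite mulr_natl -sumr_const; apply: eq_bigl => i; rewrite inE. Qed.

Lemma card_proper_subgroup (gT : finGroupType) (K L : {group gT}) :
  K \proper L -> (2 * #|K| <= #|L|)%N.
Proof.
case/andP=> sKL nsLK.
by rewrite -(Lagrange sKL) mulnC leq_mul2l indexg_gt1 nsLK orbT.
Qed.

Lemma setI_conjg_proper (gT : finGroupType) (H : {group gT}) (x : gT) :
  x \notin 'N(H)%g -> (H :&: H :^ x)%g \proper H.
Proof.
move=> xN; rewrite properEneq subsetIl andbT; apply: contra xN => /eqP eqI.
apply/normP/eqP; rewrite eq_sym eqEcard cardJg leqnn andbT -{1}eqI.
exact: subsetIr.
Qed.

Lemma card_lcosetIrcoset_le (gT : finGroupType) (H : {group gT}) (x : gT) :
  (#|(x^-1 *: H :&: H :* x)%g| <= #|(H :&: H :^ x)%g|)%N.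
Proof.
set K := _ :&: _; have [-> | [y0 y0K]] := set_0Vmem K; first by rewrite cards0.
rewrite -(card_rcoset (H :&: H :^ x)%g y0); apply/subset_leq_card/subsetP => y yK.
move: yK y0K; rewrite !inE !mem_lcoset !mem_rcoset invgK.
move=> /andP[xyH yxH] /andP[xy0H y0xH]; rewrite inE mem_conjg; apply/andP; split.
  have -> : (y * y0^-1 = (y * x^-1) * (y0 * x^-1)^-1)%g.
    by rewrite invMg invgK mulgA mulgKV.
  by rewrite groupM ?groupV.
have -> : ((y * y0^-1) ^ x^-1 = (x * y) * (x * y0)^-1)%g.
  by rewrite conjgE invgK invMg !mulgA.
by rewrite groupM ?groupV.
Qed.

Definition sign (b : bool) : rat := if b then 1 else -1.

Lemma sign_pm1 (b : bool) : pm1 (sign b).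
Proof. by case: b; rewrite /pm1 eqxx ?orbT. Qed.

Lemma signN (b : bool) : sign (~~ b) = - sign b.
Proof. by case: b; rewrite /= ?opprK. Qed.

Definition hom_triple_sum (gT : finGroupType) (G : {set gT}) (f : gT -> rat) : rat :=
  \sum_(x in G) \sum_(y in G) f x * f y * f (x * y)%g.

Lemma pm1_eq_indicator (a b c : rat) : pm1 a -> pm1 b -> pm1 c ->
  (if a * b == c then 1 else 0) = (1 + a * b * c) / 2.
Proof.
have n1 : ((-1 : rat) == 1) = false by [].
have n2 : ((1 : rat) == -1) = false by [].
by case/orP=> /eqP->; case/orP=> /eqP->; case/orP=> /eqP->;
  rewrite ?mulr1 ?mul1r ?mulrN1 ?mulN1r ?opprK ?eqxx ?n1 ?n2; lra.
Qed.

Lemma hom_probE (gT : finGroupType) (G : {group gT}) (f : gT -> rat) :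
  (forall x, x \in G -> pm1 (f x)) ->
  hom_prob G f = (1 + hom_triple_sum G f / #|G|%:R ^+ 2) / 2.
Proof.
move=> f_pm1; rewrite /hom_prob.
have -> : #|[set p : gT * gT | (p.1 \in G) && (p.2 \in G)
                                && (f p.1 * f p.2 == f (p.1 * p.2)%g)]|%:R
          = \sum_(x in G) \sum_(y in G) (1 + f x * f y * f (x * y)%g) / 2 :> rat.
  rewrite -sumr_const (eq_bigl (fun p : gT * gT => (p.1 \in G) && (p.2 \in G)
                   && (f p.1 * f p.2 == f (p.1 * p.2)%g))) => [|p]; last by rewrite inE.
  rewrite big_mkcondr -(pair_big (mem G) (mem G) (fun x y =>
          if f x * f y == f (x * y)%g then 1 else 0 : rat)) /=.
  apply: eq_bigr => x xG; apply: eq_bigr => y yG.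
  by rewrite pm1_eq_indicator ?f_pm1 ?groupM.
rewrite /hom_triple_sum.
under eq_bigr do rewrite -mulr_suml big_split /= sumr_const.
rewrite -mulr_suml big_split /= sumr_const -mulr_natl natrM.
have G0 : #|G|%:R != 0 :> rat by rewrite pnatr_eq0 -lt0n cardG_gt0.
by field.
Qed.

Section CosetTwist.

Variables (gT : finGroupType) (H : {group gT}) (phi : gT -> rat).

Local Notation signs := {ffun {set gT} -> bool}.

Definition coset_twist (s : signs) (x : gT) : rat :=
  phi (x * (repr (H :* x))^-1)%g * sign (s (H :* x)%g).

Definition twisted_ext (s : signs) (x : gT) : rat :=
  if x \in H then phi x else coset_twist s x.

Definition twist_corr (a b : gT) : rat :=
  if (b * a^-1)%g \in H then phi (b * a^-1)%g else 0.

(* The mean of [twisted_ext s x * twisted_ext s y * twisted_ext s (x * y)] over all s. *)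
Definition twist_triple (x y : gT) : rat :=
  if x \in H then (if y \in H then 1 else phi x * twist_corr y (x * y)%g)
  else if y \in H then phi y * twist_corr x (x * y)%g
  else if (x * y)%g \in H then phi (x * y)%g * twist_corr x y else 0.

Lemma mul_repr_rcosetV_in (x : gT) : (x * (repr (H :* x))^-1)%g \in H.
Proof. by rewrite -groupV invMg invgK -mem_rcoset mem_repr_rcoset. Qed.

Hypothesis phi_hom : pm1_hom H phi.

Let phi_pm1 : forall x, x \in H -> pm1 (phi x) := proj1 phi_hom.
Let phiM : forall x y, x \in H -> y \in H -> phi (x * y)%g = phi x * phi y :=
  proj2 phi_hom.

Lemma coset_twist_pm1 s x : pm1 (coset_twist s x).
Proof. by apply: pm1M; [apply/phi_pm1/mul_repr_rcosetV_in | apply: sign_pm1]. Qed.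

Lemma twisted_ext_pm1 s x : pm1 (twisted_ext s x).
Proof. by rewrite /twisted_ext; case: ifP => [/phi_pm1 | _] //; apply: coset_twist_pm1. Qed.

Lemma coset_twist_shift s a b : (b * a^-1)%g \in H ->
  coset_twist s b = phi (b * a^-1)%g * coset_twist s a.
Proof.
move=> baH; have /rcoset_eqP eqHab : b \in (H :* a)%g by rewrite mem_rcoset.
rewrite /coset_twist eqHab mulrA -phiM ?mul_repr_rcosetV_in //.
by rewrite mulgA mulgKV.
Qed.

Lemma sum_coset_twist_pair a b :
  \sum_(s : signs) coset_twist s a * coset_twist s b = #|signs|%:R * twist_corr a b.
Proof.
rewrite /twist_corr; case: ifP => baH.
  under eq_bigr => s _ do
    rewrite (coset_twist_shift s baH) mulrCA pm1_mulrr ?coset_twist_pm1 // mulr1.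
  by rewrite sumr_const mulr_natl.
pose flip (s : signs) := [ffun C => if C == (H :* a)%g then ~~ s C else s C].
rewrite mulr0 (@sum_eq0_reindexN _ _ xpredT flip) // => [|s _].
  apply: inv_inj => s; apply/ffunP => C; rewrite !ffunE.
  by case: eqP; rewrite ?negbK.
have /negbTE neqHab : (H :* b)%g != (H :* a)%g.
  by apply: contraFN baH => /eqP eqHab; rewrite -mem_rcoset -eqHab rcoset_refl.
by rewrite /coset_twist !ffunE eqxx neqHab signN mulrN mulNr.
Qed.

Lemma sum_coset_twist_triple a b c :
  \sum_(s : signs) coset_twist s a * coset_twist s b * coset_twist s c = 0.
Proof.
pose flip (s : signs) := [ffun C => ~~ s C].
rewrite (@sum_eq0_reindexN _ _ xpredT flip) // => [|s _].
  by apply: inv_inj => s; apply/ffunP => C; rewrite !ffunE negbK.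
by rewrite /coset_twist !ffunE !signN !mulrN !mulNr opprK.
Qed.

Lemma sum_twisted_ext_triple x y :
  \sum_(s : signs) twisted_ext s x * twisted_ext s y * twisted_ext s (x * y)%g
  = #|signs|%:R * twist_triple x y.
Proof.
rewrite /twist_triple /twisted_ext.
have [xH | xNH] := boolP (x \in H); have [yH | yNH] := boolP (y \in H).
- under eq_bigr do rewrite groupM // -phiM // pm1_mulrr ?phi_pm1 ?groupM //.
  by rewrite sumr_const mulr1.
- rewrite (groupMl y xH) (negbTE yNH).
  under eq_bigr do rewrite -mulrA.
  by rewrite -mulr_sumr sum_coset_twist_pair mulrCA.
- rewrite (groupMr x yH) (negbTE xNH).
  under eq_bigr do rewrite mulrAC mulrC.
  by rewrite -mulr_sumr sum_coset_twist_pair mulrCA.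
case: ifP => xyH.
  under eq_bigr do rewrite mulrC.
  by rewrite -mulr_sumr sum_coset_twist_pair mulrCA.
by rewrite sum_coset_twist_triple mulr0.
Qed.

Lemma twist_row_H_ge0 x : 0 <= \sum_(y in H) phi y * twist_corr x (x * y)%g.
Proof.
pose chi y := phi y * phi (y ^ x^-1)%g.
have -> : \sum_(y in H) phi y * twist_corr x (x * y)%g
          = \sum_(y in (H :&: H :^ x)%g) chi y.
  rewrite (big_setID (H :^ x)%g) /= [X in _ + X]big1 ?addr0 => [|y].
    apply: eq_bigr => y.
    by rewrite !inE mem_conjg /chi conjgE invgK /twist_corr !mulgA => /andP[_ ->].
  by rewrite !inE mem_conjg conjgE invgK /twist_corr !mulgA => /andP[/negbTE-> _]; rewrite mulr0.
apply: sum_pm1_char_ge0; split => [y | y z]; rewrite !inE !mem_conjg.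
  by case/andP=> yH yxH; apply: pm1M; apply: phi_pm1.
case/andP=> yH yxH /andP[zH zxH].
by rewrite /chi conjMg (phiM yH zH) (phiM yxH zxH) mulrACA.
Qed.

Variable G : {group gT}.
Hypothesis sHG : H \subset G.

Lemma twist_row_in x : x \in H -> \sum_(y in G) twist_triple x y = #|G|%:R.
Proof.
move=> xH; rewrite -sumr_const; apply: eq_bigr => y _.
rewrite /twist_triple xH; case: ifP => // _.
by rewrite /twist_corr mulgK xH pm1_mulrr ?phi_pm1.
Qed.

Lemma twist_row_notin x : x \notin H ->
  - #|(H :&: H :^ x)%g|%:R <= \sum_(y in G) twist_triple x y.
Proof.
move=> xNH; set K := (x^-1 *: H :&: H :* x)%g.
have twist_ge y : y \notin H -> - (if y \in K then 1 else 0) <= twist_triple x y.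
  move=> yNH; rewrite /twist_triple (negbTE xNH) (negbTE yNH) /twist_corr.
  rewrite !inE mem_lcoset mem_rcoset invgK.
  case xyH: ((x * y)%g \in H); case yxH: ((y * x^-1)%g \in H);
    rewrite /= ?mulr0 ?oppr0 //.
  by apply/pm1_geN1/pm1M; apply: phi_pm1.
have sum_notin_ge : - #|K|%:R <= \sum_(y in G | y \notin H) twist_triple x y.
  apply: (@le_trans _ _ (\sum_(y in G | y \notin H) - (if y \in K then 1 else 0))).
    rewrite sumrN lerN2 -sumr_const big_mkcond [X in _ <= X]big_mkcond /=.
    by apply: ler_sum => y _; case: (_ && _); case: (y \in K).
  by apply: ler_sum => y /andP[_ /twist_ge].
rewrite (bigID (mem H)) /=.
have -> : \sum_(y in G | y \in H) twist_triple x y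
          = \sum_(y in H) phi y * twist_corr x (x * y)%g.
  rewrite (eq_bigl (fun y => y \in H)) => [|y]; last first.
    by rewrite andb_idl // => /(subsetP sHG).
  by apply: eq_bigr => y yH; rewrite /twist_triple (negbTE xNH) yH.
have := card_lcosetIrcoset_le H x; rewrite -(ler_nat rat) -/K.
have := twist_row_H_ge0 x.
lra.
Qed.

(* Rows through N(H) \ H lose up to |H|, the other rows outside H up to |H|/2;
   in this form the bounds sum to |H|^2 + |H| (|G| - |N_G(H)|) / 2. *)
Lemma twist_row_ge x :
  (if x \in H then #|G|%:R + #|H|%:R else 0) - #|H|%:R / 2
    - (if x \in 'N(H)%g then #|H|%:R / 2 else 0) <= \sum_(y in G) twist_triple x y.
Proof.
have [xH | xNH] := boolP (x \in H).
  by rewrite twist_row_in // (subsetP (normG H) _ xH); lra.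
have := twist_row_notin xNH.
have := subset_leq_card (subsetIl H (H :^ x)%g); rewrite -(ler_nat rat).
have [// | xNN] := boolP (x \in 'N(H)%g); first lra.
have := card_proper_subgroup (setI_conjg_proper xNN); rewrite -(ler_nat rat) natrM.
lra.
Qed.

Lemma sum_twist_triple_ge :
  #|H|%:R ^+ 2 + #|H|%:R * (#|G|%:R - #|'N_G(H)%g|%:R) / 2
    <= \sum_(x in G) \sum_(y in G) twist_triple x y.
Proof.
apply: le_trans (ler_sum _ (fun x _ => twist_row_ge x)).
rewrite !sumrB -!big_mkcondr /=.
rewrite !sumr_const_setI sumr_const (setIidPr sHG) -[_ *+ #|G|]mulr_natl.
lra.
Qed.

Lemma sum_hom_triple_sum_twisted_ext :
  \sum_(s : signs) hom_triple_sum G (twisted_ext s)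
  = #|signs|%:R * \sum_(x in G) \sum_(y in G) twist_triple x y.
Proof.
rewrite /hom_triple_sum exchange_big mulr_sumr; apply: eq_bigr => x _.
rewrite exchange_big mulr_sumr; apply: eq_bigr => y _.
exact: sum_twisted_ext_triple.
Qed.

Lemma avg_twisted_ext s : nontrivial_on H phi -> avg G (twisted_ext s) = 0.
Proof.
case=> k kH phik; have phikN1 := pm1_eqN1 (phi_pm1 kH) phik.
rewrite /avg (@sum_eq0_reindexN _ _ _ (fun x => k * x)%g) ?mul0r // => [|x|x xG].
- exact: mulgI.
- by rewrite groupMl // (subsetP sHG).
rewrite /twisted_ext groupMl //; case: ifP => xH.
  by rewrite phiM // phikN1 mulN1r.
by rewrite (@coset_twist_shift s x (k * x)%g) ?mulgK // phikN1 mulN1r.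
Qed.

End CosetTwist.

Theorem theorem3 (gT : finGroupType) (G H : {group gT}) (phi : gT -> rat) :
  H \subset G ->
  pm1_hom H phi ->
  nontrivial_on H phi ->
  exists f : gT -> rat,
    (forall x, x \in G -> pm1 (f x)) /\
    avg G f = 0 /\
    hom_prob G f >=
      (1 / 2) * (1 + (1 / 2) * (#|H|%:R / #|G|%:R) * (1 - #|('N_G(H))%g|%:R / #|G|%:R)
                 + (#|H|%:R ^+ 2) / (#|G|%:R ^+ 2)).
Proof.
move=> sHG phi_hom phi_nontriv.
set g : rat := #|G|%:R; set h : rat := #|H|%:R; set n : rat := #|'N_G(H)%g|%:R.
pose B := h ^+ 2 + h * (g - n) / 2.
have [s Bs] : exists s, B <= hom_triple_sum G (twisted_ext H phi s).
  apply: exists_ge_avg; first by apply/card_gt0P; exists [ffun=> true].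
  rewrite (sum_hom_triple_sum_twisted_ext phi_hom); apply: ler_wpM2l; first exact: ler0n.
  exact: sum_twist_triple_ge.
exists (twisted_ext H phi s); split=> [x _|]; first exact: twisted_ext_pm1.
split; first exact: avg_twisted_ext.
rewrite hom_probE => [|x _]; last exact: twisted_ext_pm1.
have g0 : 0 < g by rewrite ltr0n cardG_gt0.
have -> : 1 / 2 * (1 + 1 / 2 * (h / g) * (1 - n / g) + h ^+ 2 / g ^+ 2)
          = (1 + B / g ^+ 2) / 2.
  by rewrite /B; field; rewrite lt0r_neq0.
by rewrite ler_pM2r // lerD2l ler_pM2r // invr_gt0 exprn_gt0.
Qed.
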